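(* For all $a,b\in(0,\sqrt7)$, $$|b\sinh a-a\sinh b|\ge|a-b|\sqrt{(a\cosh a-\sinh a)(b\cosh b-\sinh b)}.$$ *)

From Stdlib Require Import Reals.

(* Dividing by a b, with sinhc x = sinh x / x, the claim for a < b reads
     (b - a) sqrt (sinhc' a * sinhc' b) <= sinhc b - sinhc a.
   Two general facts about a function F with derivative G > 0 on [a, b] give it:
   - if G is log-concave (G'/G nonincreasing), then G (a + t) G (b - t) >= G a G b
     for t in [0, b - a] ([log_concave_product]);
   - then, pairing the slopes at a + t and b - t and using the AM-GM inequality,
     F b - F a >= (b - a) sqrt (G a G b) ([secant_ge_geometric_mean]).
   For G = sinhc' the logarithmic derivative is num2 / num1 (explicit numerators),
   whose derivative is - wronskian / num1^2, and 2 wronskian x = defect (2 x) for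
   an explicit function [defect] of cosh and sinh.  The only genuinely numerical
   step is [defect_nonneg] on [0, 2 sqrt 7]: replacing cosh and sinh by Taylor
   bounds of order 20 (obtained by repeated integration, with cosh <= 729 on
   [0, 6] for the remainder) turns [defect] into y^6 times a polynomial that is
   nonnegative for y^2 <= 28.  The theorem follows by symmetry in a and b. *)

From Stdlib Require Import Reals Lra Psatz.
From Coquelicot Require Import Coquelicot.
Open Scope R_scope.

Lemma le_of_derive_nonneg (h h' : R -> R) (a b : R) : a <= b ->
  (forall c, a <= c <= b -> is_derive h c (h' c)) ->
  (forall c, a < c < b -> 0 <= h' c) -> h a <= h b.
Proof.
  intros Hab Hd Hpos. destruct (Req_dec a b) as [->|Hne]; [lra|].
  destruct (MVT_cor2 h h' a b) as [c [Hmvt Hc]]; [lra| |].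
  - intros c Hc. apply is_derive_Reals. apply Hd; lra.
  - specialize (Hpos c Hc). nra.
Qed.

Lemma nonneg_of_derive_nonneg (h h' : R -> R) (y : R) : 0 <= y -> h 0 = 0 ->
  (forall c, 0 <= c <= y -> is_derive h c (h' c)) ->
  (forall c, 0 < c < y -> 0 <= h' c) -> 0 <= h y.
Proof.
  intros Hy H0 Hd Hpos. rewrite <- H0. exact (le_of_derive_nonneg h h' 0 y Hy Hd Hpos).
Qed.

Lemma twice_le_sum_of_sq_le_prod (u v K : R) :
  0 <= u -> 0 <= v -> 0 <= K -> K * K <= u * v -> 2 * K <= u + v.
Proof.
  intros Hu Hv HK Hprod. destruct (Rle_lt_dec (2 * K) (u + v)) as [|Hlt]; [lra|].
  assert ((u + v) * (u + v) < (2 * K) * (2 * K)) by nra.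
  pose proof (pow2_ge_0 (u - v)). nra.
Qed.

Lemma is_derive_shift (h h' : R -> R) (a s : R) :
  is_derive h (a + s) (h' (a + s)) -> is_derive (fun s => h (a + s)) s (h' (a + s)).
Proof.
  intros Hh. replace (h' (a + s)) with (scal 1 (h' (a + s)))
    by (change (1 * h' (a + s) = h' (a + s)); ring).
  apply (is_derive_comp h (fun s => a + s)); [exact Hh|]. auto_derive; [easy|ring].
Qed.

Lemma is_derive_reflect (h h' : R -> R) (b s : R) :
  is_derive h (b - s) (h' (b - s)) -> is_derive (fun s => h (b - s)) s (- h' (b - s)).
Proof.
  intros Hh. replace (- h' (b - s)) with (scal (-1) (h' (b - s)))
    by (change (-1 * h' (b - s) = - h' (b - s)); ring).
  apply (is_derive_comp h (fun s => b - s)); [exact Hh|]. auto_derive; [easy|ring].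
Qed.

Lemma product_grows_to_middle (h h' : R -> R) (a b t : R) :
  (forall x, a <= x <= b -> is_derive h x (h' x)) ->
  (forall x, a <= x <= b -> 0 < h x) ->
  (forall u v, a <= u -> u <= v -> v <= b -> h' v / h v <= h' u / h u) ->
  0 <= t -> a + t <= b - t -> h a * h b <= h (a + t) * h (b - t).
Proof.
  intros Hd Hpos Hlog Ht Hmid.
  replace (h a * h b) with (h (a + 0) * h (b - 0)) by (f_equal; f_equal; ring).
  apply (le_of_derive_nonneg (fun s => h (a + s) * h (b - s))
    (fun s => h' (a + s) * h (b - s) + h (a + s) * - h' (b - s))); [exact Ht|..].
  - intros s Hs. apply (is_derive_mult (fun s => h (a + s)) (fun s => h (b - s))).
    + apply (is_derive_shift h h'), Hd. lra.
    + apply (is_derive_reflect h h'), Hd. lra.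
    + intros; apply Rmult_comm.
  - intros s Hs.
    assert (Hu : 0 < h (a + s)) by (apply Hpos; lra).
    assert (Hv : 0 < h (b - s)) by (apply Hpos; lra).
    assert (h' (b - s) / h (b - s) <= h' (a + s) / h (a + s)) by (apply Hlog; lra).
    replace (h' (a + s) * h (b - s) + h (a + s) * - h' (b - s))
      with (h (a + s) * h (b - s) * (h' (a + s) / h (a + s) - h' (b - s) / h (b - s)))
      by (field; lra).
    apply Rmult_le_pos; [nra|lra].
Qed.

Lemma log_concave_product (h h' : R -> R) (a b t : R) :
  (forall x, a <= x <= b -> is_derive h x (h' x)) ->
  (forall x, a <= x <= b -> 0 < h x) ->
  (forall u v, a <= u -> u <= v -> v <= b -> h' v / h v <= h' u / h u) ->
  0 <= t <= b - a -> h a * h b <= h (a + t) * h (b - t).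
Proof.
  intros Hd Hpos Hlog Ht.
  destruct (Rle_lt_dec (a + t) (b - t)) as [Hmid|Hmid].
  - apply (product_grows_to_middle h h'); easy || lra.
  - replace (h (a + t) * h (b - t)) with (h (a + (b - a - t)) * h (b - (b - a - t)))
      by (rewrite Rmult_comm; f_equal; f_equal; ring).
    apply (product_grows_to_middle h h'); easy || lra.
Qed.

(* If F' = G >= 0 on [a, b] and G (a + t) * G (b - t) >= K^2 throughout, then
   the increment of F is at least (b - a) K: pair the slopes at a + t and
   b - t and use the arithmetic-geometric mean inequality. *)
Lemma secant_ge_geometric_mean (F G : R -> R) (a b K : R) : a <= b ->
  (forall x, a <= x <= b -> is_derive F x (G x)) ->
  (forall x, a <= x <= b -> 0 <= G x) -> 0 <= K ->
  (forall t, 0 <= t <= b - a -> K * K <= G (a + t) * G (b - t)) ->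
  (b - a) * K <= F b - F a.
Proof.
  intros Hab Hd Hpos HK Hprod.
  assert (Hmono : F (a + 0) - F (b - 0) - 2 * 0 * K
                  <= F (a + (b - a)) - F (b - (b - a)) - 2 * (b - a) * K).
  { apply (le_of_derive_nonneg (fun t => F (a + t) - F (b - t) - 2 * t * K)
      (fun t => G (a + t) - - G (b - t) - 2 * K)); [lra|..].
    - intros t Ht.
      apply (is_derive_minus (fun t => F (a + t) - F (b - t)) (fun t => 2 * t * K)).
      + apply (is_derive_minus (fun t => F (a + t)) (fun t => F (b - t))).
        * apply (is_derive_shift F G), Hd. lra.
        * apply (is_derive_reflect F G), Hd. lra.
      + auto_derive; [easy|ring].
    - intros t Ht.
      pose proof (twice_le_sum_of_sq_le_prod (G (a + t)) (G (b - t)) K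
        ltac:(apply Hpos; lra) ltac:(apply Hpos; lra) HK ltac:(apply Hprod; lra)).
      lra. }
  replace (a + 0) with a in Hmono by ring. replace (b - 0) with b in Hmono by ring.
  replace (a + (b - a)) with b in Hmono by ring. replace (b - (b - a)) with a in Hmono by ring.
  lra.
Qed.

Lemma is_derive_sinh (x : R) : is_derive sinh x (cosh x).
Proof. apply is_derive_Reals, derivable_pt_lim_sinh. Qed.

Lemma is_derive_cosh (x : R) : is_derive cosh x (sinh x).
Proof. apply is_derive_Reals, derivable_pt_lim_cosh. Qed.

Lemma cosh_pos (x : R) : 0 < cosh x.
Proof. unfold cosh. pose proof (exp_pos x). pose proof (exp_pos (- x)). lra. Qed.

Lemma sinh_pos (x : R) : 0 < x -> 0 < sinh x.
Proof. intros Hx. rewrite <- sinh_0. now apply sinh_lt. Qed.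

Lemma cosh_sq_sub_sinh_sq (x : R) : cosh x ^ 2 - sinh x ^ 2 = 1.
Proof. unfold cosh, sinh. rewrite exp_Ropp. pose proof (exp_pos x). field. lra. Qed.

(* The Taylor monomials y^n / n!, with the reciprocal factorial computed in R
   so that concrete instances normalize by [field]. *)
Fixpoint inv_fact (n : nat) : R :=
  match n with O => 1 | S k => inv_fact k / INR (S k) end.

Definition power_term (n : nat) (y : R) : R := inv_fact n * y ^ n.

Lemma power_term_at_0 (n : nat) : power_term (S n) 0 = 0.
Proof. unfold power_term. simpl. ring. Qed.

Lemma is_derive_power_term (n : nat) (y : R) :
  is_derive (power_term (S n)) y (power_term n y).
Proof.
  unfold power_term. auto_derive; [easy|]. cbn [inv_fact].
  change (match n with O => 1 | S _ => INR n + 1 end) with (INR (S n)).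
  field. apply not_0_INR; lia.
Qed.

Fixpoint cosh_poly (n : nat) (y : R) : R :=
  match n with O => 0 | S k => cosh_poly k y + power_term (2 * k) y end.
Fixpoint sinh_poly (n : nat) (y : R) : R :=
  match n with O => 0 | S k => sinh_poly k y + power_term (2 * k + 1) y end.

Lemma is_derive_sinh_poly (n : nat) (y : R) : is_derive (sinh_poly n) y (cosh_poly n y).
Proof.
  induction n as [|n IH]; simpl.
  - auto_derive; easy.
  - apply (is_derive_plus (sinh_poly n) (power_term (2 * n + 1))); [exact IH|].
    replace (2 * n + 1)%nat with (S (2 * n)) by lia. apply is_derive_power_term.
Qed.

Lemma is_derive_cosh_poly (n : nat) (y : R) :
  is_derive (cosh_poly (S n)) y (sinh_poly n y).
Proof.
  induction n as [|n IH].
  - simpl. unfold power_term. simpl. auto_derive; easy.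
  - apply (is_derive_plus (cosh_poly (S n)) (power_term (2 * S n))); [exact IH|].
    replace (2 * S n)%nat with (S (2 * n + 1)) by lia. apply is_derive_power_term.
Qed.

Lemma sinh_poly_at_0 (n : nat) : sinh_poly n 0 = 0.
Proof.
  induction n as [|n IH]; [reflexivity|]. cbn [sinh_poly].
  replace (2 * n + 1)%nat with (S (2 * n)) by lia. rewrite IH, power_term_at_0. ring.
Qed.

Lemma cosh_poly_at_0 (n : nat) : cosh_poly (S n) 0 = 1.
Proof.
  induction n as [|n IH]; [simpl; unfold power_term; simpl; ring|].
  change (cosh_poly (S n) 0 + power_term (2 * S n) 0 = 1).
  replace (2 * S n)%nat with (S (2 * n + 1)) by lia. rewrite IH, power_term_at_0. ring.
Qed.

(* On [0, oo) the partial sums bound cosh and sinh from below.  Since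
   cosh' = sinh and sinh' = cosh, each bound follows from the previous one by
   integrating from 0, so the two are proved by a joint induction. *)
Lemma sinh_poly_le_of_cosh_poly_le (n : nat) :
  (forall y, 0 <= y -> cosh_poly n y <= cosh y) ->
  forall y, 0 <= y -> sinh_poly n y <= sinh y.
Proof.
  intros Hcosh y Hy.
  enough (0 <= sinh y - sinh_poly n y) by lra.
  apply (nonneg_of_derive_nonneg (fun c => sinh c - sinh_poly n c)
    (fun c => cosh c - cosh_poly n c)); [easy|..].
  - rewrite sinh_0, sinh_poly_at_0. ring.
  - intros c _. apply (is_derive_minus sinh (sinh_poly n));
      [apply is_derive_sinh|apply is_derive_sinh_poly].
  - intros c Hc. specialize (Hcosh c ltac:(lra)). lra.
Qed.

Lemma cosh_poly_le (n : nat) (y : R) : 0 <= y -> cosh_poly n y <= cosh y.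
Proof.
  revert y. induction n as [|n IH]; intros y Hy.
  - simpl. left; apply cosh_pos.
  - enough (0 <= cosh y - cosh_poly (S n) y) by lra.
    apply (nonneg_of_derive_nonneg (fun c => cosh c - cosh_poly (S n) c)
      (fun c => sinh c - sinh_poly n c)); [easy|..].
    + rewrite cosh_0, cosh_poly_at_0. ring.
    + intros c _. apply (is_derive_minus cosh (cosh_poly (S n)));
        [apply is_derive_cosh|apply is_derive_cosh_poly].
    + intros c Hc. pose proof (sinh_poly_le_of_cosh_poly_le n IH c ltac:(lra)). lra.
Qed.

Lemma sinh_poly_le (n : nat) (y : R) : 0 <= y -> sinh_poly n y <= sinh y.
Proof. apply sinh_poly_le_of_cosh_poly_le. intros; now apply cosh_poly_le. Qed.

Section TaylorUpperBounds.
Variables M Y : R.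
Hypothesis cosh_le_M : forall y, 0 <= y <= Y -> cosh y <= M.

Lemma sinh_le_of_cosh_le (n : nat) :
  (forall y, 0 <= y <= Y -> cosh y <= cosh_poly n y + M * power_term (2 * n) y) ->
  forall y, 0 <= y <= Y -> sinh y <= sinh_poly n y + M * power_term (2 * n + 1) y.
Proof.
  intros Hcosh y Hy.
  replace (2 * n + 1)%nat with (S (2 * n)) by lia.
  enough (0 <= sinh_poly n y + M * power_term (S (2 * n)) y - sinh y) by lra.
  apply (nonneg_of_derive_nonneg
    (fun c => sinh_poly n c + M * power_term (S (2 * n)) c - sinh c)
    (fun c => cosh_poly n c + M * power_term (2 * n) c - cosh c)); [lra|..].
  - rewrite sinh_poly_at_0, power_term_at_0, sinh_0. ring.
  - intros c _.
    apply (is_derive_minus (fun c => sinh_poly n c + M * power_term (S (2 * n)) c) sinh);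
      [apply (is_derive_plus (sinh_poly n))|apply is_derive_sinh].
    + apply is_derive_sinh_poly.
    + apply is_derive_scal, is_derive_power_term.
  - intros c Hc. specialize (Hcosh c ltac:(lra)). lra.
Qed.

Lemma cosh_le_upper (n : nat) (y : R) :
  0 <= y <= Y -> cosh y <= cosh_poly n y + M * power_term (2 * n) y.
Proof.
  revert y. induction n as [|n IH]; intros y Hy.
  - unfold power_term. simpl. rewrite Rplus_0_l, !Rmult_1_r. now apply cosh_le_M.
  - replace (2 * S n)%nat with (S (2 * n + 1)) by lia.
    enough (0 <= cosh_poly (S n) y + M * power_term (S (2 * n + 1)) y - cosh y) by lra.
    apply (nonneg_of_derive_nonneg
      (fun c => cosh_poly (S n) c + M * power_term (S (2 * n + 1)) c - cosh c)
      (fun c => sinh_poly n c + M * power_term (2 * n + 1) c - sinh c)); [lra|..].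
    + rewrite cosh_poly_at_0, power_term_at_0, cosh_0. ring.
    + intros c _.
      apply (is_derive_minus
        (fun c => cosh_poly (S n) c + M * power_term (S (2 * n + 1)) c) cosh);
        [apply (is_derive_plus (cosh_poly (S n)))|apply is_derive_cosh].
      * apply is_derive_cosh_poly.
      * apply is_derive_scal, is_derive_power_term.
    + intros c Hc. pose proof (sinh_le_of_cosh_le n IH c ltac:(lra)). lra.
Qed.

End TaylorUpperBounds.

(* The defect function whose nonnegativity on [0, 2 sqrt 7] is the analytic
   heart of the theorem (it is twice the Wronskian below, at y = 2x). *)
Definition defect (y : R) : R :=
  - y ^ 4 / 8 - (y ^ 2 / 4 + 2) * cosh y - 3 * y ^ 2 / 4 + 2 * y * sinh y + 2.

(* The explicit even polynomial obtained by replacing cosh and sinh in [defect]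
   by their Taylor bounds of order 20; it vanishes to order 6 at 0. *)
Definition defect_lower_factor (y : R) : R :=
  1 / 288 - y ^ 4 / 806400 - y ^ 6 / 43545600 - y ^ 8 / 4470681600
  - y ^ 10 / 697426329600 - y ^ 12 / 150644087193600
  - 89 * y ^ 14 / 143111882833920000 - y ^ 16 / 13349256560640000.

Lemma defect_taylor_identity (y : R) :
  - y ^ 4 / 8 - (y ^ 2 / 4 + 2) * (cosh_poly 10 y + 729 * power_term 20 y)
  - 3 * y ^ 2 / 4 + 2 * y * sinh_poly 10 y + 2 = y ^ 6 * defect_lower_factor y.
Proof.
  unfold defect_lower_factor.
  cbn [cosh_poly sinh_poly Nat.mul Nat.add]. unfold power_term.
  cbn [inv_fact INR]. field; lra.
Qed.

(* Each negative term is dominated using y^2 <= 28. *)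
Lemma defect_lower_factor_nonneg (y : R) :
  0 <= y -> y ^ 2 <= 28 -> 0 <= defect_lower_factor y.
Proof.
  intros Hy Hy2. unfold defect_lower_factor.
  assert (Hpow : forall m, y ^ (2 * m) <= 28 ^ m).
  { intros m. rewrite pow_mult. apply pow_incr. split; [apply pow_le|]; assumption. }
  pose proof (Hpow 2%nat). pose proof (Hpow 3%nat). pose proof (Hpow 4%nat).
  pose proof (Hpow 5%nat). pose proof (Hpow 6%nat). pose proof (Hpow 7%nat).
  pose proof (Hpow 8%nat). cbn [Nat.mul Nat.add] in *. lra.
Qed.

Lemma exp_monotone (x y : R) : x <= y -> exp x <= exp y.
Proof. intros [Hlt|Heq]; [left; now apply exp_increasing|subst; lra]. Qed.

(* cosh y <= e^6 <= 3^6 on [0, 6], the constant used in the Taylor remainder. *)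
Lemma cosh_le_729 (y : R) : 0 <= y <= 6 -> cosh y <= 729.
Proof.
  intros Hy. unfold cosh.
  assert (exp (- y) <= exp y) by (apply exp_monotone; lra).
  assert (exp y <= exp 6) by (apply exp_monotone; lra).
  assert (Hsplit : exp 6 = exp 1 * exp 1 * exp 1 * (exp 1 * exp 1 * exp 1)).
  { rewrite <- !exp_plus. f_equal. ring. }
  pose proof exp_le_3. pose proof (exp_pos 1).
  assert (exp 1 * exp 1 <= 9) by nra.
  assert (exp 1 * exp 1 * exp 1 <= 27) by nra.
  assert (0 < exp 1 * exp 1 * exp 1) by (apply Rmult_lt_0_compat; nra).
  assert (exp 6 <= 729) by (rewrite Hsplit; nra).
  lra.
Qed.

Lemma defect_nonneg (y : R) : 0 <= y -> y ^ 2 <= 28 -> 0 <= defect y.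
Proof.
  intros Hy Hy2. unfold defect.
  assert (Hcosh : cosh y <= cosh_poly 10 y + 729 * power_term 20 y).
  { apply (cosh_le_upper 729 6 cosh_le_729 10 y). nra. }
  pose proof (sinh_poly_le 10 y Hy) as Hsinh.
  pose proof (defect_taylor_identity y) as Hid.
  pose proof (defect_lower_factor_nonneg y Hy Hy2).
  assert (0 <= y ^ 6 * defect_lower_factor y) by (apply Rmult_le_pos; [apply pow_le|]; lra).
  assert (0 <= y ^ 2) by (apply pow_le; lra).
  assert ((y ^ 2 / 4 + 2) * cosh y
          <= (y ^ 2 / 4 + 2) * (cosh_poly 10 y + 729 * power_term 20 y))
    by (apply Rmult_le_compat_l; lra).
  assert (2 * y * sinh_poly 10 y <= 2 * y * sinh y) by (apply Rmult_le_compat_l; lra).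
  lra.
Qed.

(* The function sinhc x = sinh x / x, its derivative, and the numerators
   num1, num2 of its first and second derivatives:
   sinhc' = num1 / x^3 and sinhc'' = num2 / x^3. *)
Definition sinhc (x : R) : R := sinh x / x.
Definition sinhc_deriv (x : R) : R := (x * cosh x - sinh x) / x ^ 2.
Definition num1 (x : R) : R := x ^ 2 * cosh x - x * sinh x.
Definition num2 (x : R) : R := x ^ 2 * sinh x - 2 * x * cosh x + 2 * sinh x.

(* num2 num1' - num2' num1, the numerator of -(num2 / num1)'. *)
Definition wronskian (x : R) : R :=
  - x ^ 4 + x ^ 2 * sinh x ^ 2 - 2 * x ^ 2 * cosh x ^ 2
  + 4 * x * sinh x * cosh x - 2 * sinh x ^ 2.

Lemma is_derive_sinhc (x : R) : x <> 0 -> is_derive sinhc x (sinhc_deriv x).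
Proof.
  intros Hx. unfold sinhc, sinhc_deriv, sinh, cosh. auto_derive; [auto|field; auto].
Qed.

Lemma is_derive_sinhc_deriv (x : R) : x <> 0 -> is_derive sinhc_deriv x (num2 x / x ^ 3).
Proof.
  intros Hx. unfold sinhc_deriv, num2, sinh, cosh. auto_derive; [auto|field; auto].
Qed.

(* x cosh x - sinh x > 0 for x > 0: its derivative is x sinh x > 0. *)
Lemma x_cosh_sub_sinh_pos (x : R) : 0 < x -> 0 < x * cosh x - sinh x.
Proof.
  intros Hx.
  destruct (MVT_cor2 (fun x => x * cosh x - sinh x) (fun x => x * sinh x) 0 x Hx)
    as [c [Hmvt Hc]].
  - intros c _. apply is_derive_Reals. unfold cosh, sinh. auto_derive; [easy|field].
  - rewrite sinh_0, Rmult_0_l in Hmvt. pose proof (sinh_pos c ltac:(lra)).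
    assert (0 < c * sinh c * (x - 0))
      by (apply Rmult_lt_0_compat; [apply Rmult_lt_0_compat|]; lra).
    lra.
Qed.

Lemma sinhc_deriv_pos (x : R) : 0 < x -> 0 < sinhc_deriv x.
Proof.
  intros Hx. apply Rdiv_lt_0_compat; [now apply x_cosh_sub_sinh_pos|now apply pow_lt].
Qed.

Lemma num1_pos (x : R) : 0 < x -> 0 < num1 x.
Proof.
  intros Hx. replace (num1 x) with (x * (x * cosh x - sinh x)) by (unfold num1; ring).
  apply Rmult_lt_0_compat; [easy|now apply x_cosh_sub_sinh_pos].
Qed.

Lemma log_derivative_sinhc_deriv (x : R) : 0 < x ->
  (num2 x / x ^ 3) / sinhc_deriv x = num2 x / num1 x.
Proof.
  intros Hx. pose proof (num1_pos x Hx).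
  replace (sinhc_deriv x) with (num1 x / x ^ 3) by (unfold sinhc_deriv, num1; field; lra).
  field. repeat split; lra || now apply pow_nonzero; lra.
Qed.

Lemma wronskian_eq_defect (x : R) : 2 * wronskian x = defect (2 * x).
Proof.
  unfold wronskian, defect, cosh, sinh. rewrite !exp_Ropp.
  replace (2 * x) with (x + x) by ring. rewrite exp_plus.
  pose proof (exp_pos x). field. lra.
Qed.

Lemma wronskian_nonneg (x : R) : 0 <= x -> x ^ 2 <= 7 -> 0 <= wronskian x.
Proof.
  intros Hx Hx2. pose proof (defect_nonneg (2 * x) ltac:(lra) ltac:(nra)).
  rewrite <- wronskian_eq_defect in *. lra.
Qed.

Lemma is_derive_num2 (x : R) : is_derive num2 x (x ^ 2 * cosh x).
Proof. unfold num2, cosh, sinh. auto_derive; [easy|field]. Qed.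

Lemma is_derive_num1 (x : R) : is_derive num1 x (x ^ 2 * sinh x + x * cosh x - sinh x).
Proof. unfold num1, cosh, sinh. auto_derive; [easy|field]. Qed.

Lemma is_derive_num2_div_num1 (x : R) : num1 x <> 0 ->
  is_derive (fun x => num2 x / num1 x) x (- wronskian x / num1 x ^ 2).
Proof.
  intros Hnum1.
  replace (- wronskian x) with
    (x ^ 2 * cosh x * num1 x - num2 x * (x ^ 2 * sinh x + x * cosh x - sinh x)).
  - apply is_derive_div; [apply is_derive_num2|apply is_derive_num1|exact Hnum1].
  - unfold wronskian, num2, num1. pose proof (cosh_sq_sub_sinh_sq x). nra.
Qed.

(* num2 / num1 is nonincreasing on (0, sqrt 7]: sinhc_deriv is log-concave there. *)
Lemma num2_div_num1_antitone (u v : R) : 0 < u -> u <= v -> v ^ 2 <= 7 ->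
  num2 v / num1 v <= num2 u / num1 u.
Proof.
  intros Hu Huv Hv.
  enough (- (num2 u / num1 u) <= - (num2 v / num1 v)) by lra.
  apply (le_of_derive_nonneg (fun x => - (num2 x / num1 x))
    (fun x => wronskian x / num1 x ^ 2)); [easy|..].
  - intros c Hc. replace (wronskian c / num1 c ^ 2) with (- (- wronskian c / num1 c ^ 2))
      by (field; pose proof (num1_pos c); lra).
    apply (is_derive_opp (fun x => num2 x / num1 x)), is_derive_num2_div_num1.
    pose proof (num1_pos c); lra.
  - intros c Hc. apply Rdiv_le_0_compat.
    + apply wronskian_nonneg; [lra|]. assert (c ^ 2 <= v ^ 2) by (apply pow_incr; lra). lra.
    + apply pow_lt, num1_pos; lra.
Qed.

Lemma sinhc_secant_bound (a b : R) : 0 < a -> a < b -> b ^ 2 <= 7 ->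
  (b - a) * sqrt (sinhc_deriv a * sinhc_deriv b) <= sinhc b - sinhc a.
Proof.
  intros Ha Hab Hb.
  pose proof (sinhc_deriv_pos a Ha). pose proof (sinhc_deriv_pos b ltac:(lra)).
  apply (secant_ge_geometric_mean sinhc sinhc_deriv); [lra| | |apply sqrt_pos|].
  - intros x Hx. apply is_derive_sinhc. lra.
  - intros x Hx. left. apply sinhc_deriv_pos. lra.
  - intros t Ht. rewrite sqrt_sqrt by nra.
    apply (log_concave_product sinhc_deriv (fun x => num2 x / x ^ 3)); [| | |lra].
    + intros x Hx. apply is_derive_sinhc_deriv. lra.
    + intros x Hx. apply sinhc_deriv_pos. lra.
    + intros u v Hu Huv Hvb. rewrite !log_derivative_sinhc_deriv by lra.
      apply num2_div_num1_antitone; [lra|lra|].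
      assert (v ^ 2 <= b ^ 2) by (apply pow_incr; lra). lra.
Qed.

(* The theorem for 0 < a < b < sqrt 7: multiply the secant bound by a b. *)
Lemma sinh_inequality_ordered (a b : R) : 0 < a -> a < b -> b < sqrt 7 ->
  Rabs (b * sinh a - a * sinh b) >=
  Rabs (a - b) * sqrt ((a * cosh a - sinh a) * (b * cosh b - sinh b)).
Proof.
  intros Ha Hab Hb7.
  assert (Hb : b ^ 2 <= 7) by (pose proof (sqrt_sqrt 7 ltac:(lra)); simpl; nra).
  pose proof (sinhc_secant_bound a b Ha Hab Hb) as Hsecant.
  pose proof (sinhc_deriv_pos a Ha). pose proof (sinhc_deriv_pos b ltac:(lra)).
  assert (Hab_pos : 0 < a * b) by nra.
  assert (Hlhs : b * sinh a - a * sinh b = - (a * b) * (sinhc b - sinhc a))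
    by (unfold sinhc; field; lra).
  assert (Hrhs : (a * cosh a - sinh a) * (b * cosh b - sinh b)
                 = (a * b) ^ 2 * (sinhc_deriv a * sinhc_deriv b))
    by (unfold sinhc_deriv; field; lra).
  rewrite Hlhs, Hrhs, sqrt_mult, sqrt_pow2 by (nra || apply pow2_ge_0).
  assert (0 <= (b - a) * sqrt (sinhc_deriv a * sinhc_deriv b))
    by (apply Rmult_le_pos; [lra|apply sqrt_pos]).
  rewrite Rabs_left1 by nra. rewrite (Rabs_left1 (a - b)) by lra.
  assert (a * b * ((b - a) * sqrt (sinhc_deriv a * sinhc_deriv b))
          <= a * b * (sinhc b - sinhc a)) by (apply Rmult_le_compat_l; lra).
  lra.
Qed.

Theorem mainTheorem8 (a b : R)
  (ha : 0 < a < sqrt 7) (hb : 0 < b < sqrt 7) :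
  Rabs (b * sinh a - a * sinh b) >=
  Rabs (a - b) * sqrt ((a * cosh a - sinh a) * (b * cosh b - sinh b)).
Proof.
  destruct (Rtotal_order a b) as [Hlt|[Heq|Hgt]].
  - apply sinh_inequality_ordered; lra.
  - subst b. replace (a - a) with 0 by ring. rewrite Rabs_R0, Rmult_0_l.
    apply Rle_ge, Rabs_pos.
  -
    rewrite Rabs_minus_sym, (Rabs_minus_sym a b), (Rmult_comm (a * cosh a - sinh a)).
    apply sinh_inequality_ordered; lra.
Qed.
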